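(* Let $\gamma$ be an analytic split-Fourier curve, $\gamma(\theta)=(\gamma_1+k'\gamma_2,\gamma_3)=\big(\sum_{n=-\infty}^{\infty}c_ne^{k'n\theta},\sum_{n=-\infty}^{\infty}d_ne^{k'n\theta}\big)$. Then the coefficients $c_n$ and $d_n$ are uniquely determined by $\gamma$.
   Context: $\mathbb{C}'$ denotes the split-complex numbers $x+k'y$, $k'^2=1$, and $e^{k'\theta}=\cosh\theta+k'\sinh\theta$. $\mathbb{L}^3$ ($\mathbb{R}^3$ with metric $-dx^2+dy^2+dz^2$) is identified with $\mathbb{C}'\times\mathbb{R}$ via $(x,y,z)\leftrightarrow(x+k'y,z)$. A curve $\gamma:\mathbb{H}^1\to\mathbb{L}^3$ (with $\mathbb{H}^1=\{e^{k'\theta}:\theta\in\mathbb{R}\}$, parametrized by $\theta$) is a split-Fourier curve if it has an expansion $\gamma(\theta)=\big(\sum_n c_ne^{k'n\theta},\sum_n d_ne^{k'n\theta}\big)$ with $c_n,d_n\in\mathbb{C}'$, only finitely many nonzero, and with $\gamma_3=\sum_nd_ne^{k'n\theta}$ real-valued. Analytic means each component is locally given by a convergent power series. *)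

From Stdlib Require Import Reals ZArith List.
From Coquelicot Require Import Coquelicot.
Open Scope R_scope.

(* Split-complex numbers x + k' y, k'^2 = 1, as pairs (x, y). *)
Record splitC := SC { sre : R; sim : R }.

Definition sc0 : splitC := SC 0 0.
Definition scadd (a b : splitC) : splitC := SC (sre a + sre b) (sim a + sim b).
Definition scmul (a b : splitC) : splitC :=
  SC (sre a * sre b + sim a * sim b) (sre a * sim b + sim a * sre b).

Definition scexp (t : R) : splitC := SC (cosh t) (sinh t).

Definition zrange (N : nat) : list Z :=
  map (fun k => (Z.of_nat k - Z.of_nat N)%Z) (seq 0 (2 * N + 1)).
Definition scsumZ (N : nat) (f : Z -> splitC) : splitC :=
  fold_right (fun n acc => scadd (f n) acc) sc0 (zrange N).

(* The split-Fourier series  sum_n c_n e^{k' n theta}  (coefficients vanishing for |n| > N). *)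
Definition sfourier (N : nat) (c : Z -> splitC) (theta : R) : splitC :=
  scsumZ N (fun n => scmul (c n) (scexp (IZR n * theta))).

(* A curve in L^3 = C' x R, parametrized by theta (point e^{k'theta} of H^1). *)
Definition curveL3 := R -> (splitC * R)%type.

(* gamma has split-Fourier expansion with coefficients (c_n), (d_n):
   only finitely many nonzero coefficients, the expansion holds for every theta,
   and gamma_3 = sum d_n e^{k' n theta} is real-valued. *)
Definition split_fourier_expansion (gamma : curveL3) (c d : Z -> splitC) : Prop :=
  exists N : nat,
    (forall n : Z, (Z.of_nat N < Z.abs n)%Z -> c n = sc0 /\ d n = sc0) /\
    (forall theta : R,
        fst (gamma theta) = sfourier N c theta /\
        SC (snd (gamma theta)) 0 = sfourier N d theta).

Definition is_split_fourier_curve (gamma : curveL3) : Prop :=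
  exists c d, split_fourier_expansion gamma c d.

Definition real_analytic (f : R -> R) : Prop :=
  forall x0 : R, exists r : R, 0 < r /\ exists a : nat -> R,
    forall x : R, Rabs (x - x0) < r -> is_pseries a (x - x0) (f x).

Definition analytic_curve (gamma : curveL3) : Prop :=
  real_analytic (fun t => sre (fst (gamma t))) /\
  real_analytic (fun t => sim (fst (gamma t))) /\
  real_analytic (fun t => snd (gamma t)).

(* Under the idempotent coordinates z = x + k'y |-> (x + y, x - y) the split-complex
   numbers become R x R and e^{k'n theta} becomes (e^{n theta}, e^{-n theta}).  So each
   coordinate of a split-Fourier sum is a real exponential sum with integer frequencies,
   and substituting theta = ln x turns such a sum, after multiplication by x^N, into a
   polynomial vanishing on (0, +oo); its coefficients therefore vanish. *)
From Stdlib Require Import Reals ZArith List Lia Lra.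
From Coquelicot Require Import Coquelicot.
Open Scope R_scope.

Lemma continuity_pt_zero_right (f : R -> R) (x0 : R) :
  continuity_pt f x0 -> (forall x, x0 < x -> f x = 0) -> f x0 = 0.
Proof.
  intros Hf Hzero.
  destruct (Req_dec (f x0) 0) as [|Hne]; [assumption|exfalso].
  destruct (Hf (Rabs (f x0)) (Rabs_pos_lt _ Hne)) as [alpha [Halpha Hnear]].
  assert (Hx : D_x no_cond x0 (x0 + alpha / 2) /\ R_dist (x0 + alpha / 2) x0 < alpha).
  { split; [split; [constructor|lra]|].
    unfold R_dist; rewrite Rabs_pos_eq; lra. }
  specialize (Hnear _ Hx); simpl in Hnear.
  rewrite Hzero in Hnear by lra.
  unfold R_dist in Hnear; rewrite Rminus_0_l, Rabs_Ropp in Hnear; lra.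
Qed.

Lemma poly_zero_on_pos (K : nat) (b : nat -> R) :
  (forall x, 0 < x -> sum_f_R0 (fun k => b k * x ^ k) K = 0) ->
  forall k, (k <= K)%nat -> b k = 0.
Proof.
  revert b; induction K as [|K IH]; intros b Hb k Hk.
  - replace k with 0%nat by lia.
    specialize (Hb 1 Rlt_0_1); simpl in Hb; lra.
  - assert (Hb0 : b 0%nat = 0).
    { set (p := fun x => sum_f_R0 (fun k => b k * x ^ k) (S K)).
      replace (b 0%nat) with (p 0).
      - apply continuity_pt_zero_right; [|exact Hb].
        apply derivable_continuous_pt, derivable_pt_finite_sum.
      - unfold p; clear; induction (S K); simpl; [ring|rewrite IHn; ring]. }
    assert (Hshift : forall x, 0 < x -> sum_f_R0 (fun k => b (S k) * x ^ k) K = 0).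
    { intros x Hx.
      apply (Rmult_eq_reg_l x); [|lra].
      rewrite Rmult_0_r, <- (Hb x Hx), (decomp_sum _ (S K)), scal_sum by lia.
      simpl; rewrite Hb0, Rmult_0_l, Rplus_0_l.
      apply sum_eq; intros; simpl; ring. }
    destruct k as [|k]; [exact Hb0|].
    apply (IH _ Hshift); lia.
Qed.

Definition lsum (l : list Z) (g : Z -> R) : R :=
  fold_right (fun n acc => g n + acc) 0 l.

Lemma lsum_app (l1 l2 : list Z) (g : Z -> R) :
  lsum (l1 ++ l2) g = lsum l1 g + lsum l2 g.
Proof. unfold lsum; induction l1 as [|n l IH]; simpl; [ring|rewrite IH; ring]. Qed.

Lemma lsum_ext (l : list Z) (f g : Z -> R) :
  (forall n, f n = g n) -> lsum l f = lsum l g.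
Proof. intros Hfg; unfold lsum; induction l as [|n l IH]; simpl; congruence. Qed.

Lemma lsum_lincomb (l : list Z) (a b : R) (f g : Z -> R) :
  lsum l (fun n => a * f n + b * g n) = a * lsum l f + b * lsum l g.
Proof. unfold lsum; induction l as [|n l IH]; simpl; [ring|rewrite IH; ring]. Qed.

Lemma zrange_S (N : nat) :
  zrange (S N) = (- Z.of_nat (S N) :: zrange N ++ Z.of_nat (S N) :: nil)%Z.
Proof.
  unfold zrange.
  replace (2 * S N + 1)%nat with (S (S (2 * N + 1))) by lia.
  rewrite seq_S, <- cons_seq, <- seq_shift, map_app; cbn [map app].
  rewrite map_map; do 2 f_equal.
  - apply map_ext; intros; lia.
  - f_equal; lia.
Qed.

Lemma lsum_zrange_extend (N M : nat) (g : Z -> R) :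
  (forall n, (Z.of_nat N < Z.abs n)%Z -> g n = 0) -> (N <= M)%nat ->
  lsum (zrange M) g = lsum (zrange N) g.
Proof.
  intros Hg HNM; induction HNM as [|M HNM IH]; [reflexivity|].
  rewrite zrange_S, app_comm_cons, lsum_app, <- IH.
  unfold lsum; simpl; rewrite !Hg by lia; ring.
Qed.

Lemma lsum_map_seq (h : nat -> Z) (g : Z -> R) (s K : nat) :
  lsum (map h (seq s (S K))) g = sum_f_R0 (fun k => g (h (s + k)%nat)) K.
Proof.
  revert s; induction K as [|K IH]; intros s.
  - unfold lsum; simpl; rewrite Nat.add_0_r; ring.
  - rewrite <- cons_seq, (decomp_sum _ (S K)) by lia.
    change (lsum (map h (s :: seq (S s) (S K))) g)
      with (g (h s) + lsum (map h (seq (S s) (S K))) g).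
    rewrite IH, Nat.add_0_r; simpl pred; f_equal.
    apply sum_eq; intros; do 2 f_equal; lia.
Qed.

Lemma lsum_zrange (N : nat) (g : Z -> R) :
  lsum (zrange N) g = sum_f_R0 (fun k => g (Z.of_nat k - Z.of_nat N)%Z) (2 * N).
Proof.
  unfold zrange; replace (2 * N + 1)%nat with (S (2 * N)) by lia.
  apply lsum_map_seq.
Qed.

Lemma exp_sum_zero (N : nat) (a : Z -> R) :
  (forall t, lsum (zrange N) (fun n => a n * exp (IZR n * t)) = 0) ->
  forall n, (Z.abs n <= Z.of_nat N)%Z -> a n = 0.
Proof.
  intros Hsum n Hn.
  assert (Hpoly : forall x, 0 < x ->
    sum_f_R0 (fun k => a (Z.of_nat k - Z.of_nat N)%Z * x ^ k) (2 * N) = 0).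
  { intros x Hx.
    rewrite <- (Rmult_0_r (x ^ N)), <- (Hsum (ln x)), lsum_zrange, scal_sum.
    apply sum_eq; intros k _.
    rewrite minus_IZR, <- !INR_IZR_INZ, Rmult_minus_distr_r, Rminus_def, exp_plus, exp_Ropp.
    change (exp (INR k * ln x)) with (Rpower x (INR k)).
    change (exp (INR N * ln x)) with (Rpower x (INR N)).
    rewrite !Rpower_pow by exact Hx.
    field; apply pow_nonzero; lra. }
  replace n with (Z.of_nat (Z.to_nat (n + Z.of_nat N)) - Z.of_nat N)%Z by lia.
  apply (poly_zero_on_pos _ _ Hpoly); lia.
Qed.

Lemma exp_sum_coef_unique (N1 N2 : nat) (a a' : Z -> R) :
  (forall n, (Z.of_nat N1 < Z.abs n)%Z -> a n = 0) ->
  (forall n, (Z.of_nat N2 < Z.abs n)%Z -> a' n = 0) ->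
  (forall t, lsum (zrange N1) (fun n => a n * exp (IZR n * t)) =
             lsum (zrange N2) (fun n => a' n * exp (IZR n * t))) ->
  forall n, a n = a' n.
Proof.
  intros Ha Ha' Hsum n.
  destruct (Z_lt_le_dec (Z.of_nat (N1 + N2)) (Z.abs n)) as [Hbig|Hsmall].
  { rewrite Ha, Ha' by lia; reflexivity. }
  apply Rminus_diag_uniq, (exp_sum_zero (N1 + N2) (fun m => a m - a' m)); [|exact Hsmall].
  intros t.
  set (f := fun m => a m * exp (IZR m * t)).
  set (f' := fun m => a' m * exp (IZR m * t)).
  assert (Hf : forall m, (Z.of_nat N1 < Z.abs m)%Z -> f m = 0).
  { intros m Hm; unfold f; rewrite Ha by exact Hm; ring. }
  assert (Hf' : forall m, (Z.of_nat N2 < Z.abs m)%Z -> f' m = 0).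
  { intros m Hm; unfold f'; rewrite Ha' by exact Hm; ring. }
  rewrite (lsum_ext _ _ (fun m => 1 * f m + -1 * f' m)) by (intros; unfold f, f'; ring).
  rewrite lsum_lincomb, (lsum_zrange_extend N1 _ f), (lsum_zrange_extend N2 _ f') by
    (assumption || lia).
  unfold f, f'; rewrite Hsum; ring.
Qed.

Definition sc_plus (z : splitC) : R := sre z + sim z.
Definition sc_minus (z : splitC) : R := sre z - sim z.

Lemma splitC_eq (z w : splitC) :
  sc_plus z = sc_plus w -> sc_minus z = sc_minus w -> z = w.
Proof.
  destruct z as [x y], w as [x' y']; unfold sc_plus, sc_minus; simpl.
  intros Hp Hm; f_equal; lra.
Qed.

Lemma sc_plus_scmul (z w : splitC) : sc_plus (scmul z w) = sc_plus z * sc_plus w.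
Proof. unfold sc_plus; simpl; ring. Qed.

Lemma sc_minus_scmul (z w : splitC) : sc_minus (scmul z w) = sc_minus z * sc_minus w.
Proof. unfold sc_minus; simpl; ring. Qed.

Lemma sc_plus_scexp (t : R) : sc_plus (scexp t) = exp t.
Proof. unfold sc_plus, scexp, cosh, sinh; simpl; field. Qed.

Lemma sc_minus_scexp (t : R) : sc_minus (scexp t) = exp (- t).
Proof. unfold sc_minus, scexp, cosh, sinh; simpl; field. Qed.

Lemma scsumZ_additive (L : splitC -> R) :
  L sc0 = 0 -> (forall z w, L (scadd z w) = L z + L w) ->
  forall N f, L (scsumZ N f) = lsum (zrange N) (fun n => L (f n)).
Proof.
  intros H0 HD N f; unfold scsumZ, lsum.
  induction (zrange N) as [|n l IH]; simpl; [exact H0|rewrite HD, IH; reflexivity].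
Qed.

Lemma sc_plus_sfourier (N : nat) (c : Z -> splitC) (t : R) :
  sc_plus (sfourier N c t) = lsum (zrange N) (fun n => sc_plus (c n) * exp (IZR n * t)).
Proof.
  unfold sfourier; rewrite scsumZ_additive.
  - apply lsum_ext; intros n; rewrite sc_plus_scmul, sc_plus_scexp; reflexivity.
  - unfold sc_plus; simpl; ring.
  - intros; unfold sc_plus; simpl; ring.
Qed.

Lemma sc_minus_sfourier (N : nat) (c : Z -> splitC) (t : R) :
  sc_minus (sfourier N c t) = lsum (zrange N) (fun n => sc_minus (c n) * exp (IZR n * - t)).
Proof.
  unfold sfourier; rewrite scsumZ_additive.
  - apply lsum_ext; intros n; rewrite sc_minus_scmul, sc_minus_scexp.
    f_equal; f_equal; ring.
  - unfold sc_minus; simpl; ring.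
  - intros; unfold sc_minus; simpl; ring.
Qed.

Lemma sfourier_coef_unique (N1 N2 : nat) (c c' : Z -> splitC) :
  (forall n, (Z.of_nat N1 < Z.abs n)%Z -> c n = sc0) ->
  (forall n, (Z.of_nat N2 < Z.abs n)%Z -> c' n = sc0) ->
  (forall t, sfourier N1 c t = sfourier N2 c' t) ->
  forall n, c n = c' n.
Proof.
  intros Hc Hc' Hsum n; apply splitC_eq.
  - apply (exp_sum_coef_unique N1 N2 (fun m => sc_plus (c m)) (fun m => sc_plus (c' m))).
    + intros m Hm; rewrite Hc by exact Hm; unfold sc_plus; simpl; ring.
    + intros m Hm; rewrite Hc' by exact Hm; unfold sc_plus; simpl; ring.
    + intros t; rewrite <- !sc_plus_sfourier, Hsum; reflexivity.
  - apply (exp_sum_coef_unique N1 N2 (fun m => sc_minus (c m)) (fun m => sc_minus (c' m))).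
    + intros m Hm; rewrite Hc by exact Hm; unfold sc_minus; simpl; ring.
    + intros m Hm; rewrite Hc' by exact Hm; unfold sc_minus; simpl; ring.
    + intros t; rewrite <- (Ropp_involutive t), <- !sc_minus_sfourier, Hsum; reflexivity.
Qed.

Theorem theorem5p1 (gamma : curveL3) :
  analytic_curve gamma ->
  is_split_fourier_curve gamma ->
  forall c d c' d' : Z -> splitC,
    split_fourier_expansion gamma c d ->
    split_fourier_expansion gamma c' d' ->
    forall n : Z, c n = c' n /\ d n = d' n.
Proof.
  intros _ _ c d c' d' [N1 [Hsupp1 Hexp1]] [N2 [Hsupp2 Hexp2]] n; split.
  - apply (sfourier_coef_unique N1 N2); [apply Hsupp1|apply Hsupp2|].
    intros t; destruct (Hexp1 t) as [<- _], (Hexp2 t) as [<- _]; reflexivity.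
  - apply (sfourier_coef_unique N1 N2); [apply Hsupp1|apply Hsupp2|].
    intros t; destruct (Hexp1 t) as [_ <-], (Hexp2 t) as [_ <-]; reflexivity.
Qed.
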